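(* Let $\ell,n$ be positive integers with $2^\ell\le n$. If $A\subseteq\mathbb{Z}_{2^n}$ satisfies $|A|>(1-2^{-\ell})2^n$, then there exist $x,y\in\mathbb{Z}_{2^n}$ such that $\Sigma^*\{\underbrace{x,\dots,x}_{2^\ell-1},y\}\subseteq A$.
   Context: For a multiset $S=\{a_1,\dots,a_d\}$ of (not necessarily distinct) elements of $\mathbb{Z}_{2^n}$, $\Sigma^*S=\{\sum_{i\in I}a_i \bmod 2^n:\emptyset\ne I\subseteq[d]\}$. Thus $\Sigma^*\{x,\dots,x,y\}$ (with $2^\ell-1$ copies of $x$) equals $\{jx: 1\le j\le 2^\ell-1\}\cup\{y+jx: 0\le j\le 2^\ell-1\}$. *)

From mathcomp Require Import all_boot all_order all_algebra.
Set Implicit Arguments. Unset Strict Implicit. Unset Printing Implicit Defensive.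
Import GRing.Theory.
Local Open Scope ring_scope.

Definition sigma_star (G : finZmodType) (s : seq G) : {set G} :=
  [set x : G | [exists I : {set 'I_(size s)},
     (I != set0) && (x == \sum_(i in I) s`_i)]].

Definition copies_then (G : zmodType) (k : nat) (x y : G) : seq G :=
  rcons (nseq k x) y.

From mathcomp Require Import all_boot all_order all_algebra.
From mathcomp Require Import zify.
Set Implicit Arguments. Unset Strict Implicit. Unset Printing Implicit Defensive.
Import GRing.Theory.

(* Let B be the complement of A, so that 2^l |B| < 2^n; we need x, y with
   x j, y + x j outside B for 0 < j < 2^l, resp. 0 <= j < 2^l.  Once x is
   fixed, y exists by the union bound: each shift y |-> y + x j meets B for
   only |B| values of y.  For x we use the union bound over the 2^(n-1) odd
   residues: the number of pairs (x odd, 0 < j < 2^l) with x j in B is at most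
   2^(l-1) |B|, by induction on l: an odd j permutes the odd residues, so it
   contributes at most the number of odd elements of B, while an even j = 2i
   contributes as i does for {z | 2z in B}, whose size is at most twice the
   number of even elements of B. *)

Lemma card_bigcup_seq_le (T : finType) (I : Type) (r : seq I) (F : I -> {set T}) :
  #|\bigcup_(i <- r) F i| <= \sum_(i <- r) #|F i|.
Proof.
apply: (big_ind2 (fun (A : {set T}) k => #|A| <= k : Prop)) => [|A a B b leA leB|//].
  by rewrite cards0.
exact: leq_trans (leq_card_setU A B) (leq_add leA leB).
Qed.

Lemma exists_avoiding (T : finType) (I : eqType) (r : seq I) (X : {set T})
    (F : I -> {set T}) :
  \sum_(i <- r) #|X :&: F i| < #|X| ->
  exists2 x, x \in X & {in r, forall i, x \notin F i}.
Proof.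
move=> small.
have /subsetPn[x Xx notU] : ~~ (X \subset \bigcup_(i <- r) (X :&: F i)).
  apply: contraTN small => /subset_leq_card le_X; rewrite -leqNgt.
  exact: leq_trans le_X (card_bigcup_seq_le _ _).
exists x => // i ri; apply: contra notU => Fx.
by rewrite (big_rem i ri) /= !inE Xx Fx.
Qed.

Lemma sum_nat_even_odd (f : nat -> nat) m : 0 < m ->
  \sum_(1 <= j < m.*2) f j = \sum_(1 <= i < m) f i.*2 + \sum_(0 <= i < m) f i.*2.+1.
Proof.
case: m => // m _; elim: m => [|m IHm].
  by rewrite [in RHS]big_geq // !big_nat1.
rewrite doubleS (big_nat_recr m.+1.*2.+1) // (big_nat_recr m.+1.*2) //.
by rewrite !(big_nat_recr m.+1) //= IHm; lia.
Qed.

Section PowerOfTwoModulus.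
Variable n : nat.
Hypothesis n_gt0 : 0 < n.
Local Notation G := 'Z_(2 ^ n).

Lemma Z2n_gt1 : 1 < 2 ^ n.
Proof. by rewrite -{1}(expn0 2) ltn_exp2l. Qed.

Lemma card_Z2n : #|G| = 2 ^ n.
Proof. by rewrite card_ord Zp_cast // Z2n_gt1. Qed.

Lemma ltn_Z2n (z : G) : z < 2 ^ n.
Proof. by rewrite -[X in _ < X](Zp_cast Z2n_gt1). Qed.

Lemma val_Z2n_nat m : (m%:R : G)%R = m %% 2 ^ n :> nat.
Proof. by rewrite val_Zp_nat ?Z2n_gt1. Qed.

Lemma odd_Z2n_nat m : odd (m%:R : G)%R = odd m.
Proof. by rewrite val_Z2n_nat odd_mod // oddX orbF eqn0Ngt n_gt0. Qed.

Lemma odd_Z2n_mulrn (x : G) j : odd (x *+ j)%R = odd x && odd j.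
Proof. by rewrite -[x in (x *+ j)%R]natr_Zp -mulrnA odd_Z2n_nat oddM. Qed.

Lemma odd_Z2n_add1 (x : G) : odd (x + 1)%R = ~~ odd x.
Proof. by rewrite -[x in (x + 1)%R]natr_Zp natr1 odd_Z2n_nat. Qed.

Lemma mulrn_Z2n_inj j : odd j -> injective (fun x : G => (x *+ j)%R).
Proof.
move=> oj x y /=; rewrite -(mulr_natr x) -(mulr_natr y); apply: mulIr.
by rewrite unitZpE ?coprime_pexpl ?coprime2n ?Z2n_gt1.
Qed.

Lemma expn2_pred_double : 2 ^ n = (2 ^ n.-1).*2.
Proof. by rewrite -mul2n -expnS prednK. Qed.

Lemma val_Z2n_double (z : G) :
  (z *+ 2)%R = (if z < 2 ^ n.-1 then z.*2 else z.*2 - 2 ^ n) :> nat.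
Proof.
rewrite -[z in (z *+ 2)%R]natr_Zp -mulrnA val_Z2n_nat muln2.
have := expn2_pred_double; have := ltn_Z2n z; case: ifP => z_half z_lt two_n.
  by rewrite modn_small //; lia.
have -> : z.*2 = z.*2 - 2 ^ n + 2 ^ n by lia.
by rewrite modnDr modn_small; lia.
Qed.

Definition odds : {set G} := [set x : G | odd x].

Lemma card_odds : 2 * #|odds| = 2 ^ n.
Proof.
have evens : ~: odds = (fun x => (x + 1)%R) @^-1: odds.
  by apply/setP => x; rewrite !inE odd_Z2n_add1.
have := cardsC odds; rewrite evens card_preimset ?card_Z2n; last exact: addIr.
by lia.
Qed.

Definition halve (B : {set G}) : {set G} := [set z : G | (z *+ 2)%R \in B].

Lemma card_halve B : #|halve B| <= 2 * #|B :\: odds|.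
Proof.
pose f (z : G) := ((z *+ 2)%R, z < 2 ^ n.-1).
have f_inj : injective f.
  move=> z w eq_f; move: (congr1 fst eq_f) (congr1 snd eq_f) => /= eq_double same_half.
  apply: ord_inj.
  have := val_Z2n_double z; rewrite eq_double same_half val_Z2n_double.
  move: same_half; have := ltn_Z2n z; have := ltn_Z2n w; have := expn2_pred_double.
  by case: ifP; lia.
have f_halve : f @: halve B \subset setX (B :\: odds) [set: bool].
  apply/subsetP => u /imsetP[z]; rewrite !inE => zB ->.
  by rewrite zB odd_Z2n_mulrn andbF.
rewrite -(card_imset _ f_inj) (leq_trans (subset_leq_card f_halve)) //.
by rewrite cardsX cardsT card_bool mulnC.
Qed.

Definition hits (B : {set G}) j := #|odds :&: [set x : G | (x *+ j)%R \in B]|.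

Definition hits_below B l := \sum_(1 <= j < 2 ^ l) hits B j.

Lemma hits_odd B j : odd j -> hits B j <= #|B :&: odds|.
Proof.
move=> oj; rewrite /hits -(card_imset _ (mulrn_Z2n_inj oj)); apply: subset_leq_card.
apply/subsetP => u /imsetP[x]; rewrite !inE => /andP[ox xjB] ->.
by rewrite xjB odd_Z2n_mulrn ox oj.
Qed.

Lemma hits_double B j : hits B j.*2 = hits (halve B) j.
Proof. by apply: eq_card => x; rewrite !inE -muln2 mulrnA. Qed.

Lemma hits_below_bound l B : 2 * hits_below B l <= 2 ^ l * #|B|.
Proof.
elim: l B => [|l IHl] B; first by rewrite /hits_below big_geq.
have even_part : \sum_(1 <= i < 2 ^ l) hits B i.*2 = hits_below (halve B) l.
  by apply: eq_bigr => i _; exact: hits_double.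
have odd_part : \sum_(0 <= i < 2 ^ l) hits B i.*2.+1 <= 2 ^ l * #|B :&: odds|.
  rewrite -[X in _ <= X * _]subn0 -sum_nat_const_nat; apply: leq_sum => i _.
  by apply: hits_odd; rewrite /= odd_double.
rewrite /hits_below expnS [2 * 2 ^ l]mul2n sum_nat_even_odd ?expn_gt0 // even_part.
have := IHl (halve B); have := card_halve B; have := cardsID odds B.
by move: odd_part; nia.
Qed.

Lemma exists_odd_avoiding l (B : {set G}) : 2 ^ l * #|B| < 2 ^ n ->
  exists2 x, x \in odds & forall j, 0 < j < 2 ^ l -> (x *+ j)%R \notin B.
Proof.
move=> small.
have [|x ox avoid] := exists_avoiding (r := index_iota 1 (2 ^ l)) (X := odds)
  (F := fun j => [set x : G | (x *+ j)%R \in B]).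
  rewrite -(ltn_pmul2l (isT : 0 < 2)) card_odds.
  exact: leq_ltn_trans (hits_below_bound l B) small.
exists x => // j /andP[j_gt0 j_lt].
by have := avoid j; rewrite mem_index_iota j_gt0 j_lt inE => /(_ isT).
Qed.

End PowerOfTwoModulus.

Lemma exists_translate_avoiding (G : finZmodType) (B : {set G}) (s : seq G) :
  size s * #|B| < #|G| -> exists y : G, {in s, forall t, (y + t)%R \notin B}.
Proof.
move=> small.
have [|y _ avoid] := exists_avoiding (X := [set: G]) (r := s)
  (F := fun t => (fun y => (y + t)%R) @^-1: B).
  rewrite cardsT (eq_bigr (fun=> #|B|)) => [|t _]; last first.
    by rewrite setTI card_preimset //; exact: addIr.
  by rewrite big_const_seq count_predT iter_addn_0 mulnC.
by exists y => t st; have := avoid t st; rewrite inE.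
Qed.

Section SigmaStarOfCopies.
Local Open Scope ring_scope.
Variables (G : finZmodType) (k : nat) (x y : G).
Local Notation s := (copies_then k x y : seq G).

Lemma size_copies_then : size s = k.+1.
Proof. by rewrite size_rcons size_nseq. Qed.

Lemma nth_copies_then i : (i <= k)%N -> s`_i = if i == k then y else x.
Proof.
rewrite leq_eqVlt => /orP[/eqP-> | i_lt]; first by rewrite nth_rcons size_nseq ltnn eqxx.
by rewrite nth_rcons size_nseq i_lt nth_nseq i_lt ltn_eqF.
Qed.

Lemma sigma_star_copies_then_sub (A : {set G}) :
  (forall j, (0 < j <= k)%N -> x *+ j \in A) ->
  (forall j, (j <= k)%N -> y + x *+ j \in A) ->
  sigma_star s \subset A.
Proof.
move=> x_mul y_add; apply/subsetP => z; rewrite inE => /existsP[I /andP[I_neq0 /eqP->]].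
have k_lt : (k < size s)%N by rewrite size_copies_then.
pose o := Ordinal k_lt.
have s_i (i : 'I_(size s)) : s`_i = if i == o then y else x.
  by rewrite nth_copies_then // -ltnS -size_copies_then.
have card_le_k (J : {set 'I_(size s)}) : o \notin J -> (#|J| <= k)%N.
  move=> oJ; have : J \subset [set~ o].
    by apply/subsetP => i iJ; rewrite !inE; apply: contraNneq oJ => <-.
  by move/subset_leq_card/leq_trans; apply; rewrite cardsC1 card_ord size_copies_then.
case: (boolP (o \in I)) => oI.
  rewrite (big_setD1 o) // s_i eqxx (eq_bigr (fun=> x)) => [|i]; last first.
    by rewrite in_setD1 s_i => /andP[/negbTE-> _].
  by rewrite sumr_const y_add // card_le_k // !inE eqxx.
rewrite (eq_bigr (fun=> x)) => [|i iI]; last by rewrite s_i; case: eqP iI oI => // -> ->.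
by rewrite sumr_const x_mul // card_gt0 I_neq0 card_le_k.
Qed.
End SigmaStarOfCopies.

(* The density condition |A| > (1 - 2^-l) 2^n is stated multiplied by 2^l. *)
Theorem theorem2p1 (l n : nat) (hl : (0 < l)%N) (hn : (0 < n)%N)
  (hln : (2 ^ l <= n)%N) (A : {set 'Z_(2 ^ n)}) :
  ((2 ^ l - 1) * 2 ^ n < #|A| * 2 ^ l)%N ->
  exists x y : 'Z_(2 ^ n),
    sigma_star (copies_then (2 ^ l - 1) x y) \subset A.
Proof.
move=> hA.
have small : 2 ^ l * #|~: A| < 2 ^ n.
  have := cardsC A; rewrite card_Z2n // => cardA.
  by have := expn_gt0 2 l; move: hA cardA; nia.
have [x _ x_mul] := exists_odd_avoiding hn small.
have [|y y_add] := exists_translate_avoiding (B := ~: A)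
  (s := [seq (x *+ j)%R | j <- iota 0 (2 ^ l)]).
  by rewrite size_map size_iota card_Z2n.
have pow_gt0 := expn_gt0 2 l.
exists x, y; apply: sigma_star_copies_then_sub => j le_j.
  by have := x_mul j; rewrite inE negbK; apply; lia.
have := y_add (x *+ j)%R; rewrite inE negbK; apply; apply: map_f.
by rewrite mem_iota; lia.
Qed.
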